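(* Let $A=(Q,\Sigma,\delta,q_0,F)$ be a minimal poNFA (i.e., no poNFA with fewer states accepts $L(A)$). Then $L({}_{q_1}A)\neq L({}_{q_2}A)$ for all distinct states $q_1,q_2\in Q$, where ${}_qA=(Q,\Sigma,\delta,q,F)$.
   Context: NFAs have a single initial state and no $\varepsilon$-transitions. For an NFA with transition function $\delta$, write $p\leq q$ if $q\in\delta(p,w)$ for some word $w$; the NFA is a poNFA (partially ordered NFA) if $\leq$ is a partial order on its states. *)

From mathcomp Require Import all_boot.
Set Implicit Arguments. Unset Strict Implicit. Unset Printing Implicit Defensive.

Record nfa (Sigma : finType) := Nfa {
  state : finType;
  delta : state -> Sigma -> {set state};
  init : state;
  final : {set state}
}.

Section Defs.
Variable Sigma : finType.

Definition delta_set (A : nfa Sigma) (S : {set state A}) (a : Sigma)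
  : {set state A} := \bigcup_(p in S) delta p a.

Definition delta_word (A : nfa Sigma) (S : {set state A}) (w : seq Sigma)
  : {set state A} := foldl (delta_set (A:=A)) S w.

Definition delta_star (A : nfa Sigma) (p : state A) (w : seq Sigma)
  : {set state A} := delta_word [set p] w.

Definition lang (A : nfa Sigma) : pred (seq Sigma) :=
  fun w => [exists q in delta_star (init A) w, q \in final A].

Definition with_init (A : nfa Sigma) (q : state A) : nfa Sigma :=
  @Nfa Sigma (state A) (@delta Sigma A) q (final A).

Definition reach (A : nfa Sigma) (p q : state A) : Prop :=
  exists w : seq Sigma, q \in delta_star p w.

Definition is_poNFA (A : nfa Sigma) : Prop :=
  [/\ (forall p : state A, reach p p),
      (forall p q : state A, reach p q -> reach q p -> p = q) &
      (forall p q r : state A, reach p q -> reach q r -> reach p r)].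

Definition minimal_poNFA (A : nfa Sigma) : Prop :=
  is_poNFA A /\
  forall B : nfa Sigma, is_poNFA B -> lang B =i lang A ->
    #|state A| <= #|state B|.

End Defs.

(* If two distinct states q1, q2 of a poNFA accept the same language, then by
   antisymmetry one of them, say q1, is not reachable from the other.  Deleting
   q1 and redirecting every transition into q1 towards q2 preserves the
   language and yields a smaller poNFA, contradicting minimality: a new cycle
   through a redirected edge would give a path from q2 back to q1. *)
From Stdlib Require Import Classical.
From mathcomp Require Import all_boot.
Set Implicit Arguments. Unset Strict Implicit. Unset Printing Implicit Defensive.

Section Runs.
Variable Sigma : finType.
Implicit Types (A : nfa Sigma) (a : Sigma) (w : seq Sigma).

Definition accepts A (q : state A) : pred (seq Sigma) := lang (with_init q).

Lemma in_delta_star_nil A (p q : state A) : (q \in delta_star p [::]) = (q == p).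
Proof. by rewrite /delta_star /delta_word /= in_set1. Qed.

Lemma in_delta_word A w (S : {set state A}) q :
  q \in delta_word S w <-> exists2 p, p \in S & q \in delta_star p w.
Proof.
elim: w S q => [|a w IHw] S q.
  rewrite /delta_star /delta_word /=; split => [qS|[p pS]].
    by exists q; rewrite ?in_set1.
  by rewrite in_set1 => /eqP->.
change (q \in delta_word (delta_set S a) w <->
  exists2 p, p \in S & q \in delta_word (delta_set [set p] a) w).
rewrite IHw; split => [[r /bigcupP[p pS rp] qr]|[p pS /IHw[r /bigcupP[p']]]].
  exists p => //; apply/IHw; exists r => //.
  by apply/bigcupP; exists p; rewrite ?in_set1.
rewrite in_set1 => /eqP-> rp qr.
by exists r => //; apply/bigcupP; exists p.
Qed.

Lemma in_delta_star_cons A (p q : state A) a w :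
  q \in delta_star p (a :: w) <-> exists2 r, r \in delta p a & q \in delta_star r w.
Proof.
change (q \in delta_word (delta_set [set p] a) w <->
  exists2 r, r \in delta p a & q \in delta_star r w).
rewrite in_delta_word; split => [[r /bigcupP[p']]|[r rp qr]].
  by rewrite in_set1 => /eqP-> rp qr; exists r.
by exists r => //; apply/bigcupP; exists p; rewrite ?in_set1.
Qed.

Lemma accepts_nil A (q : state A) : accepts q [::] = (q \in final A).
Proof.
apply/existsP/idP => [[p /andP[]]|qF].
  by rewrite in_delta_star_nil => /eqP->.
by exists q; rewrite in_delta_star_nil eqxx.
Qed.

Lemma accepts_cons A (q : state A) a w :
  accepts q (a :: w) <-> exists2 r, r \in delta q a & accepts r w.
Proof.
split => [/existsP[p /andP[/in_delta_star_cons[r rq pr] pF]]|[r rq /existsP[p]]].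
  by exists r => //; apply/existsP; exists p; rewrite pr.
case/andP=> pr pF; apply/existsP; exists p; rewrite pF andbT.
by apply/in_delta_star_cons; exists r.
Qed.

Lemma reach_refl A (p : state A) : reach p p.
Proof. by exists [::]; rewrite in_delta_star_nil. Qed.

Lemma reach_cons A (p r q : state A) a : r \in delta p a -> reach r q -> reach p q.
Proof. by move=> rp [w qr]; exists (a :: w); apply/in_delta_star_cons; exists r. Qed.

Lemma reach_ind A (P : state A -> state A -> Prop) :
  (forall p, P p p) ->
  (forall p r q a, r \in delta p a -> P r q -> P p q) ->
  forall p q, reach p q -> P p q.
Proof.
move=> P_refl P_cons p q [w]; elim: w p => [|a w IHw] p.
  by rewrite in_delta_star_nil => /eqP->.
by case/in_delta_star_cons=> r rp qr; apply: P_cons rp (IHw r qr).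
Qed.

Lemma reach_trans A (p q r : state A) : reach p q -> reach q r -> reach p r.
Proof.
move: p q; apply: reach_ind => // p s q a sp IHs qr.
exact: reach_cons sp (IHs qr).
Qed.

End Runs.

Section Merge.
Variables (Sigma : finType) (A : nfa Sigma) (q1 q2 : state A).
Hypothesis q21 : q2 != q1.

Definition merge_state := {q : state A | q != q1}.

Definition redirect (q : state A) : merge_state := insubd (exist _ q2 q21) q.

Lemma val_redirect q : val (redirect q) = if q == q1 then q2 else q.
Proof. by rewrite /redirect val_insubd; case: eqP. Qed.

Definition merge_nfa : nfa Sigma :=
  @Nfa Sigma merge_state (fun u a => redirect @: delta (val u) a)
    (redirect (init A)) [set u : merge_state | val u \in final A].

Lemma card_merge_nfa : #|state merge_nfa| < #|state A|.
Proof.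
by rewrite /= card_sig cardC1 ltn_predL; apply/card_gt0P; exists q1.
Qed.

Section Language.
Hypothesis same_lang : accepts q1 =1 accepts q2.

Lemma accepts_merge_nfa w (u : merge_state) :
  @accepts _ merge_nfa u w = accepts (val u) w.
Proof.
elim: w u => [|a w IHw] u; first by rewrite !accepts_nil inE.
apply/idP/idP => /accepts_cons[r ru acc_r]; apply/accepts_cons.
  move: acc_r; case/imsetP: ru => p pu ->; rewrite IHw val_redirect => acc_p.
  by exists p => //; move: acc_p; case: eqP => [->|]; rewrite ?same_lang.
exists (redirect r); first exact: imset_f.
by move: acc_r; rewrite IHw val_redirect; case: eqP => [->|]; rewrite ?same_lang.
Qed.

Lemma lang_merge_nfa : lang merge_nfa =i lang A.
Proof.
move=> w; rewrite -[w \in lang _]/(@accepts _ merge_nfa _ w).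
rewrite -[w \in lang A]/(accepts (init A) w).
by rewrite accepts_merge_nfa val_redirect; case: eqP => [->|]; rewrite -?same_lang.
Qed.

End Language.

Lemma reach_merge_nfa (u v : merge_state) : @reach _ merge_nfa u v ->
  reach (val u) (val v) \/ (reach (val u) q1 /\ reach q2 (val v)).
Proof.
pose P (u v : merge_state) :=
  reach (val u) (val v) \/ (reach (val u) q1 /\ reach q2 (val v)).
move: u v; apply: (@reach_ind _ merge_nfa P) => [u|u r v a /imsetP[p pu ->{r}]].
  by left; apply: reach_refl.
rewrite /P val_redirect; case: eqP => [p_q1|_].
  rewrite p_q1 in pu => reach_v; right; split.
    exact: reach_cons pu (reach_refl _).
  by case: reach_v => [|[]].
case=> [reach_v|[reach_q1 reach_v]]; first by left; apply: reach_cons pu reach_v.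
by right; split => //; apply: reach_cons pu reach_q1.
Qed.

Lemma merge_nfa_poNFA : is_poNFA A -> ~ reach q2 q1 -> is_poNFA merge_nfa.
Proof.
case=> _ anti _ q1_unreachable; split; [exact: reach_refl| |exact: reach_trans].
move=> u v /reach_merge_nfa[uv|[uq1 q2v]] /reach_merge_nfa[vu|[vq1 q2u]].
- exact/val_inj/anti.
- by case: q1_unreachable; apply: reach_trans q2u (reach_trans uv vq1).
- by case: q1_unreachable; apply: reach_trans q2v (reach_trans vu uq1).
- by case: q1_unreachable; apply: reach_trans q2u uq1.
Qed.

End Merge.

Theorem lemma12 (Sigma : finType) (A : nfa Sigma) :
  minimal_poNFA A ->
  forall q1 q2 : state A, q1 != q2 ->
    ~ (lang (with_init q1) =i lang (with_init q2)).
Proof.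
move=> [A_po A_min] q1 q2 q12 same_lang.
wlog q1_unreachable : q1 q2 q12 same_lang / ~ reach q2 q1.
  move=> wlog_unreachable.
  case: (classic (reach q2 q1)) => [r21|]; last exact: wlog_unreachable.
  apply: (wlog_unreachable q2 q1) => [|w|r12]; first by rewrite eq_sym.
    by rewrite same_lang.
  by case/eqP: q12; case: A_po => _ anti _; apply: anti.
have q21 : q2 != q1 by rewrite eq_sym.
have := A_min _ (merge_nfa_poNFA q21 A_po q1_unreachable) (lang_merge_nfa q21 same_lang).
by rewrite leqNgt card_merge_nfa.
Qed.
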